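(* For every unweighted congestion game $\mathcal{G}$ with cubic latency functions, $\mathrm{Apx}^1_\emptyset(\mathcal{G})\le\frac{17929}{34}\approx 527.323$.
   Context: A weighted congestion game consists of a finite set $[n]=\{1,\dots,n\}$ of players, a finite set $E$ of resources, for each player $i$ a weight $w_i>0$ and a nonempty finite strategy set $\Sigma_i\subseteq 2^E$, and for each resource $e$ a latency function $\ell_e:\mathbb{R}_{\ge 0}\to\mathbb{R}_{\ge 0}$. It is unweighted if $w_i=1$ for all $i$. Cubic latency functions means $\ell_e(x)=\sum_{j=0}^{3}\alpha_{e,j}x^j$ with all $\alpha_{e,j}\ge 0$. For a (possibly partial) profile in which each player in some subset $P\subseteq[n]$ has chosen a strategy $s_i$, the congestion of $e$ is $L_e=\sum_{i\in P:\,e\in s_i}w_i$ and the cost of a player $i\in P$ is $\sum_{e\in s_i}\ell_e(L_e)$. For a full profile $S$, $\mathrm{SUM}(S)=\sum_{i\in[n]}c_i(S)$ and $S^*$ minimizes $\mathrm{SUM}$. A one-round walk from the empty strategy profile: starting with no player having chosen a strategy, the players arrive one at a time in some order, and each arriving player selects a best response, i.e., a strategy in her strategy set minimizing her cost given the strategies already chosen by the previously arrived players (later players not yet present); the outcome is the full profile after all $n$ players have chosen. $\mathrm{Apx}^1_\emptyset(\mathcal{G})$ is the maximum, over all orderings of the players and all choices among best responses, of $\mathrm{SUM}(\text{outcome})/\mathrm{SUM}(S^* )$. *)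

From HB Require Import structures.
From mathcomp Require Import all_boot all_order all_algebra all_fingroup.
Set Implicit Arguments. Unset Strict Implicit. Unset Printing Implicit Defensive.
Import Order.TTheory GRing.Theory Num.Theory.
Local Open Scope ring_scope.

(* Players are 'I_n, resources are a finType E.  A (possibly partial)
   profile is given by a set P of present players and S : 'I_n -> {set E}
   (S j is only relevant for j \in P). *)

Definition cubic_latency (R : realFieldType) (E : finType)
  (alpha : E -> 'I_4 -> R) (e : E) (x : R) : R :=
  \sum_(j < 4) alpha e j * x ^+ j.

Definition congestion (E : finType) (n : nat) (P : {set 'I_n})
  (S : 'I_n -> {set E}) (e : E) : nat :=
  #|[set j in P | e \in S j]|.

Definition deviate (E : finType) (n : nat) (S : 'I_n -> {set E})
  (i : 'I_n) (s : {set E}) : 'I_n -> {set E} :=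
  fun j => if j == i then s else S j.

(* Cost of player i (assumed in P) when playing s, the others in P playing S. *)
Definition cost_with (R : realFieldType) (E : finType) (n : nat)
  (alpha : E -> 'I_4 -> R) (P : {set 'I_n}) (S : 'I_n -> {set E})
  (i : 'I_n) (s : {set E}) : R :=
  \sum_(e in s) cubic_latency alpha e (congestion P (deviate S i s) e)%:R.

Definition cost (R : realFieldType) (E : finType) (n : nat)
  (alpha : E -> 'I_4 -> R) (S : 'I_n -> {set E}) (i : 'I_n) : R :=
  cost_with alpha [set: 'I_n] S i (S i).

Definition SUM (R : realFieldType) (E : finType) (n : nat)
  (alpha : E -> 'I_4 -> R) (S : 'I_n -> {set E}) : R :=
  \sum_(i < n) cost alpha S i.

Definition feasible (E : finType) (n : nat) (Sigma : 'I_n -> {set {set E}})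
  (S : 'I_n -> {set E}) : Prop :=
  forall i, S i \in Sigma i.

Definition arrived (n : nat) (sigma : {perm 'I_n}) (k : 'I_n) : {set 'I_n} :=
  [set sigma j | j : 'I_n & (j <= k)%N].

(* S is the outcome of a one-round walk from the empty profile in which the
   players arrive in the order sigma 0, sigma 1, ..., sigma (n-1), each
   choosing a best response given the previously arrived players. *)
Definition one_round_walk_outcome (R : realFieldType) (E : finType) (n : nat)
  (Sigma : 'I_n -> {set {set E}}) (alpha : E -> 'I_4 -> R)
  (sigma : {perm 'I_n}) (S : 'I_n -> {set E}) : Prop :=
  forall k : 'I_n,
    S (sigma k) \in Sigma (sigma k) /\
    forall s, s \in Sigma (sigma k) ->
      cost_with alpha (arrived sigma k) S (sigma k) (S (sigma k))
        <= cost_with alpha (arrived sigma k) S (sigma k) s.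

(* Write x_e and o_e for the congestion of resource e in the walk outcome S
   and in the reference profile Sopt, l_e for its latency, and
   Phi(S) = \sum_e \sum_(t = 1..x_e) l_e(t) for Rosenthal's potential.
   The proof has three ingredients.
   - Potential identity: when the players arrive one at a time, the cost a
     player pays on arrival is exactly the increase of the potential, so
     Phi(S) is the sum of the arrival costs.
   - Best responses: each arrival cost is at most the cost of playing the
     reference strategy instead, which is at most \sum_(e in Sopt i) l_e(x_e+1);
     hence Phi(S) <= \sum_e o_e l_e(x_e + 1).
   - A per-resource inequality, proved monomial by monomial using closed forms
     for \sum t^d (d <= 3) and AM-GM type bounds:
       34 x l(x) + 369 o l(x+1) - 369 \sum_(t=1..x) l(t) <= 17929 o l(o).
   Summing the last inequality over resources and using the second one gives
   34 SUM(S) <= 17929 SUM(Sopt). *)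

From HB Require Import structures.
From mathcomp Require Import all_boot all_order all_algebra all_fingroup.
From mathcomp Require Import ring lra.
Import Order.TTheory GRing.Theory Num.Theory.
Local Open Scope ring_scope.

Section SumsOfPowers.
Variable R : realFieldType.

Lemma sum_pow0 (X : nat) : \sum_(t < X) (t.+1%:R : R) ^+ 0 = X%:R.
Proof. under eq_bigr do rewrite expr0. by rewrite sumr_const card_ord. Qed.

Lemma sum_pow1 (X : nat) :
  2 * \sum_(t < X) (t.+1%:R : R) ^+ 1 = X%:R * (X%:R + 1).
Proof.
elim: X => [|X IH]; first by rewrite big_ord0 mulr0 mul0r.
by rewrite big_ord_recr /= mulrDr IH -natr1; ring.
Qed.

Lemma sum_pow2 (X : nat) :
  6 * \sum_(t < X) (t.+1%:R : R) ^+ 2 = X%:R * (X%:R + 1) * (2 * X%:R + 1).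
Proof.
elim: X => [|X IH]; first by rewrite big_ord0 mulr0 !mul0r.
by rewrite big_ord_recr /= mulrDr IH -natr1; ring.
Qed.

Lemma sum_pow3 (X : nat) :
  4 * \sum_(t < X) (t.+1%:R : R) ^+ 3 = X%:R ^+ 2 * (X%:R + 1) ^+ 2.
Proof.
elim: X => [|X IH]; first by rewrite big_ord0 mulr0 expr0n mul0r.
by rewrite big_ord_recr /= mulrDr IH -natr1; ring.
Qed.

End SumsOfPowers.

Section MonomialBounds.
Variable R : realFieldType.
Implicit Types a b x o g : R.

Lemma amgm3 a b : 0 <= a -> 0 <= b -> 3 * a * b ^+ 2 <= a ^+ 3 + 2 * b ^+ 3.
Proof.
move=> ha hb.
have := mulr_ge0 (sqr_ge0 (a - b)) (addr_ge0 ha (mulr_ge0 (ler0n R 2) hb)).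
nra.
Qed.

Lemma amgm4 a b : 0 <= a -> 0 <= b -> 4 * a * b ^+ 3 <= a ^+ 4 + 3 * b ^+ 4.
Proof.
move=> ha hb.
have hpos : 0 <= a ^+ 2 + 2 * a * b + 3 * b ^+ 2 by nra.
have := mulr_ge0 (sqr_ge0 (a - b)) hpos.
nra.
Qed.

(* The quartic polynomial left over by the AM-GM step of the cubic case is
   bounded on [0, +oo); a sum-of-squares certificate. *)
Lemma quartic_remainder_bound x : 0 <= x ->
  34 * x ^+ 4 + 164 / 3 * (x + 1) ^+ 4 - 369 / 4 * x ^+ 2 * (x + 1) ^+ 2
  <= 16 * 5000.
Proof.
move=> hx.
have := sqr_ge0 (x ^+ 2 - 5 * x - 45).
have := sqr_ge0 (x - 10).
have := sqr_ge0 (x ^+ 2 - 10 * x).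
nra.
Qed.

(* The per-monomial inequality for degrees 0, 1, 2, with g = \sum_(t=1..x) t^d
   given by its closed form; o is a natural number, i.e. o = 0 or o >= 1. *)
Lemma monomial_bound0 {x o g} : 0 <= x -> (o = 0 \/ 1 <= o) -> g = x ->
  34 * x + 369 * o - 369 * g <= 17929 * o.
Proof. by move=> hx [->|ho] ->; lra. Qed.

Lemma monomial_bound1 {x o g} : 0 <= x -> (o = 0 \/ 1 <= o) ->
  2 * g = x * (x + 1) ->
  34 * x ^+ 2 + 369 * o * (x + 1) - 369 * g <= 17929 * o ^+ 2.
Proof.
move=> hx [->|ho] hg; first by nra.
have := sqr_ge0 (2 * o - (x + 1) / 2).
nra.
Qed.

Lemma monomial_bound2 {x o g} : 0 <= x -> (o = 0 \/ 1 <= o) ->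
  6 * g = x * (x + 1) * (2 * x + 1) ->
  34 * x ^+ 3 + 369 * o * (x + 1) ^+ 2 - 369 * g <= 17929 * o ^+ 3.
Proof.
move=> hx [->|ho] hg; first by nra.
have ho3 : 1 <= o ^+ 3 by have := exprn_ege1 3 ho; lra.
have := amgm3 (4 * o) ((x + 1) / 2) ltac:(lra) ltac:(lra).
nra.
Qed.

(* Degree 3 splits into o = 1, where the bound is tight at x in {4, 5}, and
   o >= 2, handled by AM-GM and the quartic remainder bound. *)
Lemma monomial_bound3_one {x g} : 0 <= x -> (x <= 4 \/ 5 <= x) ->
  4 * g = x ^+ 2 * (x + 1) ^+ 2 ->
  34 * x ^+ 4 + 369 * (x + 1) ^+ 3 - 369 * g <= 17929.
Proof.
move=> hx hx45 hg.
have h45 : 0 <= (x - 4) * (x - 5) by case: hx45 => h; nra.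
have hpos : 0 <= 233 * x ^+ 2 + 1359 * x + 3512 by nra.
have := mulr_ge0 h45 hpos.
nra.
Qed.

Lemma monomial_bound3_big {x o g} : 0 <= x -> 2 <= o ->
  4 * g = x ^+ 2 * (x + 1) ^+ 2 ->
  34 * x ^+ 4 + 369 * o * (x + 1) ^+ 3 - 369 * g <= 17929 * o ^+ 4.
Proof.
move=> hx ho hg.
have := amgm4 (27 / 8 * o) (2 / 3 * (x + 1)) ltac:(lra) ltac:(lra).
have := quartic_remainder_bound x hx.
have ho2 : 4 <= o ^+ 2 by nra.
have ho4 : 16 <= o ^+ 4 by rewrite (_ : o ^+ 4 = o ^+ 2 * o ^+ 2) -?exprD //; nra.
nra.
Qed.

Lemma monomial_ineq (j : 'I_4) (X O : nat) :
  34 * (X%:R * X%:R ^+ j) + 369 * (O%:R * X.+1%:R ^+ j)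
    - 369 * (\sum_(t < X) (t.+1%:R : R) ^+ j)
  <= 17929 * (O%:R * O%:R ^+ j).
Proof.
have hX : 0 <= (X%:R : R) by rewrite ler0n.
have hO : (O%:R : R) = 0 \/ 1 <= (O%:R : R).
  by case: O => [|O]; [left | right; rewrite ler1n].
rewrite -natr1.
case: j => [[|[|[|[|j]]]] hj] //=.
- have := monomial_bound0 hX hO (sum_pow0 R X); rewrite !expr0 !mulr1; lra.
- have := monomial_bound1 hX hO (sum_pow1 R X); rewrite !expr1 => h; nra.
- have := monomial_bound2 hX hO (sum_pow2 R X); rewrite !exprS !expr0 => h; nra.
- have hsum := sum_pow3 R X; rewrite !exprS !expr0 !mulr1.
  case: O hO => [|[|O]] hO.
  + rewrite ?mul0r ?mulr0; nra.
  + have hx45 : (X%:R : R) <= 4 \/ 5 <= (X%:R : R).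
      by case: (leqP X 4) => h; [left; rewrite (ler_nat R X 4)
                                 | right; rewrite (ler_nat R 5 X)].
    have := monomial_bound3_one hX hx45 hsum; rewrite !mul1r; lra.
  + have ho : 2 <= (O.+2%:R : R) by rewrite (ler_nat R 2 O.+2).
    have := monomial_bound3_big hX ho hsum; rewrite !exprS !expr0 !mulr1; lra.
Qed.

End MonomialBounds.

Section CubicLatency.
Context {R : realFieldType} {E : finType} (alpha : E -> 'I_4 -> R).
Hypothesis alpha_ge0 : forall e j, 0 <= alpha e j.

Definition potential (e : E) (c : nat) : R :=
  \sum_(t < c) cubic_latency alpha e t.+1%:R.

Lemma latency_mono e (m k : nat) : (m <= k)%N ->
  cubic_latency alpha e m%:R <= cubic_latency alpha e k%:R.
Proof.
move=> hmk; apply: ler_sum => j _; apply: ler_wpM2l => //.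
by apply: lerXn2r; rewrite ?nnegrE ?ler0n // ler_nat.
Qed.

Lemma resource_ineq e (X O : nat) :
  34 * (X%:R * cubic_latency alpha e X%:R)
    + 369 * (O%:R * cubic_latency alpha e X.+1%:R) - 369 * potential e X
  <= 17929 * (O%:R * cubic_latency alpha e O%:R).
Proof.
rewrite /potential /cubic_latency.
have -> : \sum_(t < X) \sum_(j < 4) alpha e j * (t.+1%:R : R) ^+ j
        = \sum_(j < 4) alpha e j * \sum_(t < X) t.+1%:R ^+ j.
  by rewrite exchange_big; apply: eq_bigr => j _; rewrite mulr_sumr.
rewrite !mulr_sumr -big_split -sumrB /=.
apply: ler_sum => j _.
have := ler_wpM2l (alpha_ge0 e j) (monomial_ineq R j X O).
lra.
Qed.

End CubicLatency.

Section Congestion.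
Context {E : finType} {n : nat}.
Implicit Types (P : {set 'I_n}) (S : 'I_n -> {set E}).

Definition load S (e : E) : nat := congestion [set: 'I_n] S e.

Lemma congestion_deviate_self P S i e :
  congestion P (deviate S i (S i)) e = congestion P S e.
Proof.
rewrite /congestion /deviate; apply: eq_card => j; rewrite !inE.
by case: (j =P i) => [->|].
Qed.

Lemma congestion_deviate_le P S i s e :
  (congestion P (deviate S i s) e <= (load S e).+1)%N.
Proof.
rewrite /congestion /load.
apply: leq_trans (_ : #|i |: [set j in [set: 'I_n] | e \in S j]| <= _)%N.
  apply: subset_leq_card; apply/subsetP => j; rewrite !inE /deviate.
  by case: eqP => //= _ /andP[_ ->].
by rewrite cardsU1; case: (i \in _).
Qed.

Lemma congestion_add P S i e : i \notin P ->
  congestion (i |: P) S e = (congestion P S e + (e \in S i))%N.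
Proof.
move=> hi; rewrite /congestion.
case: (boolP (e \in S i)) => hei; last first.
  rewrite addn0; apply: eq_card => j; rewrite !inE.
  by case: (j =P i) => [->|] //=; rewrite (negbTE hei) andbF.
rewrite (_ : [set j in i |: P | e \in S j] = i |: [set j in P | e \in S j]).
  by rewrite cardsU1 inE (negbTE hi) /= addnC.
by apply/setP => j; rewrite !inE; case: (j =P i) => [->|] //=; rewrite hei.
Qed.

Lemma sum_by_resources (R : realFieldType) S (f : E -> R) :
  \sum_(i < n) \sum_(e in S i) f e = \sum_e (load S e)%:R * f e.
Proof.
under eq_bigr do rewrite big_mkcond.
rewrite exchange_big; apply: eq_bigr => e _ /=.
rewrite -big_mkcond /= sumr_const mulr_natl; congr (_ *+ _).
by apply: eq_card => j; rewrite !inE.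
Qed.

Lemma SUM_by_resources (R : realFieldType) (alpha : E -> 'I_4 -> R) S :
  SUM alpha S = \sum_e (load S e)%:R * cubic_latency alpha e (load S e)%:R.
Proof.
rewrite /SUM -sum_by_resources; apply: eq_bigr => i _.
by rewrite /cost /cost_with; apply: eq_bigr => e _; rewrite congestion_deviate_self.
Qed.

End Congestion.

Section OneRoundWalk.
Context {E : finType} {n : nat} (sigma : {perm 'I_n}).

(* The first m players of the arrival order; arrived sigma k is prefix k.+1. *)
Definition prefix (m : nat) : {set 'I_n} := [set sigma j | j : 'I_n & (j < m)%N].

Lemma prefix0 : prefix 0 = set0.
Proof. by apply/setP => y; rewrite inE; apply/imsetP => -[j]; rewrite inE ltn0. Qed.

Lemma prefix_all : prefix n = [set: 'I_n].
Proof.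
apply/setP => y; rewrite inE; apply/imsetP; exists ((sigma^-1)%g y).
  by rewrite inE ltn_ord.
by rewrite permKV.
Qed.

Lemma prefixS (j : 'I_n) : prefix j.+1 = sigma j |: prefix j.
Proof.
apply/setP => y; rewrite in_setU1; apply/imsetP/orP.
  move=> [k]; rewrite inE ltnS leq_eqVlt => /orP[/eqP hk|hk] ->.
    by left; apply/eqP; congr (sigma _); apply: val_inj.
  by right; apply/imsetP; exists k; rewrite ?inE.
case=> [/eqP ->|/imsetP[k hk ->]]; first by exists j; rewrite // inE /=.
by exists k => //; move: hk; rewrite !inE => /ltnW.
Qed.

Lemma notin_prefix (j : 'I_n) : sigma j \notin prefix j.
Proof.
by apply/imsetP => -[k]; rewrite inE => hk /perm_inj hkj; rewrite -hkj ltnn in hk.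
Qed.

Context {R : realFieldType} (alpha : E -> 'I_4 -> R) (S : 'I_n -> {set E}).

Lemma potential_step (j : 'I_n) :
  \sum_e potential alpha e (congestion (prefix j.+1) S e)
  = \sum_e potential alpha e (congestion (prefix j) S e)
    + cost_with alpha (prefix j.+1) S (sigma j) (S (sigma j)).
Proof.
rewrite prefixS /cost_with [X in _ + X]big_mkcond -big_split /=.
apply: eq_bigr => e _.
rewrite congestion_deviate_self !congestion_add ?notin_prefix //.
by case: (e \in S (sigma j)); rewrite ?addn0 ?addr0 // addn1 /potential big_ord_recr.
Qed.

Lemma potential_prefix (m : nat) : (m <= n)%N ->
  \sum_e potential alpha e (congestion (prefix m) S e)
  = \sum_(j : 'I_n | (j < m)%N) cost_with alpha (prefix j.+1) S (sigma j) (S (sigma j)).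
Proof.
elim: m => [|m IH] hm.
  rewrite [RHS]big1 => [|j]; last by rewrite ltn0.
  by apply: big1 => e _; rewrite prefix0 /congestion (_ : [set _ in set0 | _] = set0)
    ?cards0 /potential ?big_ord0 //; apply/setP => y; rewrite !inE.
pose j0 := Ordinal hm.
rewrite (bigD1 j0) ?ltnSn //= (eq_bigl (fun j : 'I_n => (j < m)%N)) => [|j].
  by rewrite -IH ?(ltnW hm) // addrC (potential_step j0).
by rewrite ltnS /= -val_eqE /= ltn_neqAle andbC.
Qed.

(* Best responses against the reference profile T bound the final potential
   by the cost of each player joining the full outcome S with her T-strategy. *)
Lemma walk_potential_le {Sigma : 'I_n -> {set {set E}}} {T : 'I_n -> {set E}} :
  (forall e j, 0 <= alpha e j) ->
  one_round_walk_outcome Sigma alpha sigma S -> feasible Sigma T ->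
  \sum_e potential alpha e (load S e)
  <= \sum_e (load T e)%:R * cubic_latency alpha e (load S e).+1%:R.
Proof.
move=> alpha_ge0 hwalk hT.
rewrite /load -prefix_all potential_prefix // prefix_all.
rewrite (eq_bigl xpredT) => [|j]; last by rewrite ltn_ord.
rewrite -sum_by_resources.
rewrite [in X in _ <= X](reindex_inj (@perm_inj _ sigma)) /=.
apply: ler_sum => j _.
apply: le_trans ((hwalk j).2 _ (hT _)) _.
apply: ler_sum => e _; apply: latency_mono => //; exact: congestion_deviate_le.
Qed.

End OneRoundWalk.

Theorem mainTheorem12 (R : realFieldType) (E : finType) (n : nat)
  (Sigma : 'I_n -> {set {set E}}) (alpha : E -> 'I_4 -> R)
  (hSigma : forall i, Sigma i != set0)
  (halpha : forall e j, 0 <= alpha e j)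
  (sigma : {perm 'I_n}) (S : 'I_n -> {set E})
  (hwalk : one_round_walk_outcome Sigma alpha sigma S)
  (Sopt : 'I_n -> {set E})
  (hSopt : feasible Sigma Sopt)
  (hmin : forall S', feasible Sigma S' -> SUM alpha Sopt <= SUM alpha S') :
  SUM alpha S <= (17929%:R / 34%:R) * SUM alpha Sopt.
Proof.
have hpot := walk_potential_le sigma alpha S halpha hwalk hSopt.
have hres : \sum_e (34 * ((load S e)%:R * cubic_latency alpha e (load S e)%:R)
      + 369 * ((load Sopt e)%:R * cubic_latency alpha e (load S e).+1%:R)
      - 369 * potential alpha e (load S e))
    <= \sum_e 17929 * ((load Sopt e)%:R * cubic_latency alpha e (load Sopt e)%:R).
  by apply: ler_sum => e _; apply: resource_ineq.
rewrite sumrB big_split /= -!mulr_sumr -!SUM_by_resources in hres.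
move: hpot hres; set Phi := \sum_e potential alpha e _; set Dev := \sum_e _ * _.
move=> hpot hres.
rewrite mulrAC ler_pdivlMr ?ltr0n //.
lra.
Qed.
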